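(* Let $g,h\in\mathbb{R}[x]$ be polynomials of degree at least one and let $f=gh$, $n=\deg f$. Then the number of real numbers $x$ satisfying both (a) $g(x)=\pm1$ or $h(x)=\pm1$, and (b) $f(x)>1$, is at most $n$. *)

From mathcomp Require Import all_boot all_order all_algebra.
From mathcomp Require Import reals.
Set Implicit Arguments. Unset Strict Implicit. Unset Printing Implicit Defensive.
Import Order.TTheory GRing.Theory Num.Theory.
Local Open Scope ring_scope.

Definition special_point (R : realType) (g h : {poly R}) (x : R) : bool :=
  [|| (g.[x] == 1), (g.[x] == -1), (h.[x] == 1) | (h.[x] == -1)]
  && (1 < (g * h).[x]).

From mathcomp Require Import all_boot all_order all_algebra.
From mathcomp Require Import reals.
From mathcomp Require Import polyorder polyrcf.
From mathcomp Require Import lra zify.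
Set Implicit Arguments. Unset Strict Implicit. Unset Printing Implicit Defensive.
Import Order.TTheory GRing.Theory Num.Theory.

(* Between consecutive critical points of g and h both polynomials are strictly
   monotone, so the point (g x, h x) moves monotonically through the 5 x 5 grid
   of zones cut out by the values -1 and 1.  A special point is a visit to one
   of the four zone pairs {g = 1, h > 1}, {g = -1, h < -1}, {h = 1, g > 1},
   {h = -1, g < -1}.  A monotone motion can still reach at most 2 of them, this
   budget drops by one at each special point, and it grows by at most one when g
   or h changes direction, i.e. at a root of g' or h'.  Hence there are at most
   2 + (deg g - 1) + (deg h - 1) = deg (g h) special points. *)

Definition zones := iota 0 5.

Definition special_zone (a b : nat) : bool :=
  [|| (a == 3) && (b == 4), (a == 1) && (b == 0), (b == 3) && (a == 4)
    | (b == 1) && (a == 0)].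

(* Zone c can be met strictly after zone a by a quantity moving strictly up
   (or down); the odd zones are the single values -1 and 1. *)
Definition reachable (up : bool) (a c : nat) : bool :=
  (if up then a <= c else c <= a) && ((a == c) ==> ~~ odd a).

(* The largest number of special zone pairs that (g, h), moving strictly in the
   directions (up_g, up_h), can still visit after the zone pair (a, b). *)
Definition pot (up_g up_h : bool) (a b : nat) : nat :=
  match up_g, up_h with
  | true, true => ((a == 0) && (b == 0)) + ~~ ((3 <= a) && (3 <= b))
  | false, false => ((a == 4) && (b == 4)) + ~~ ((a <= 1) && (b <= 1))
  | true, false => maxn ((b == 4) * (1 + (a <= 2))) ((a == 0) * (1 + (2 <= b)))
  | false, true => maxn ((a == 4) * (1 + (b <= 2))) ((b == 0) * (1 + (2 <= a)))
  end.

Definition dirs := [:: true; false].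

Lemma dirs_in (b : bool) : b \in dirs. Proof. by case: b. Qed.

Lemma pot_step_all : all (fun ug => all (fun uh => all (fun a => all (fun b =>
  all (fun c => all (fun d => reachable ug a c ==> reachable uh b d ==>
    (pot ug uh c d + special_zone c d <= pot ug uh a b)) zones) zones) zones) zones)
  dirs) dirs.
Proof. by vm_compute. Qed.

Lemma pot_turn_all : all (fun ug => all (fun uh => all (fun ug' => all (fun uh' =>
  all (fun c => all (fun d =>
    pot ug' uh' c d <= pot ug uh c d + (ug != ug') + (uh != uh')) zones) zones)
  dirs) dirs) dirs) dirs.
Proof. by vm_compute. Qed.

Lemma pot_le2_all :
  all (fun ug => all (fun uh => all (fun c => all (fun d =>
    pot ug uh c d <= 2) zones) zones) dirs) dirs.
Proof. by vm_compute. Qed.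

Lemma pot_step ug uh a b c d : a \in zones -> b \in zones -> c \in zones -> d \in zones ->
  reachable ug a c -> reachable uh b d -> pot ug uh c d + special_zone c d <= pot ug uh a b.
Proof.
move=> a5 b5 c5 d5; move: pot_step_all => /allP/(_ _ (dirs_in ug))/allP/(_ _ (dirs_in uh)).
by move=> /allP/(_ _ a5)/allP/(_ _ b5)/allP/(_ _ c5)/allP/(_ _ d5)/implyP H /H/implyP.
Qed.

Lemma pot_turn ug uh ug' uh' c d : c \in zones -> d \in zones ->
  pot ug' uh' c d <= pot ug uh c d + (ug != ug') + (uh != uh').
Proof.
move=> c5 d5; move: pot_turn_all => /allP/(_ _ (dirs_in ug))/allP/(_ _ (dirs_in uh)).
by move=> /allP/(_ _ (dirs_in ug'))/allP/(_ _ (dirs_in uh'))/allP/(_ _ c5)/allP/(_ _ d5).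
Qed.

Lemma pot_le2 ug uh c d : c \in zones -> d \in zones -> pot ug uh c d <= 2.
Proof.
move=> c5 d5; move: pot_le2_all => /allP/(_ _ (dirs_in ug))/allP/(_ _ (dirs_in uh)).
by move=> /allP/(_ _ c5)/allP/(_ _ d5).
Qed.

Local Open Scope ring_scope.
Local Notation noroot p := (forall x, ~~ root p x).

Definition zone (R : realDomainType) (x : R) : nat :=
  if x < -1 then 0%N else if x == -1 then 1%N else if x < 1 then 2%N
  else if x == 1 then 3%N else 4%N.

Lemma zone_in (R : realDomainType) (x : R) : zone x \in zones.
Proof. by rewrite /zone; do !case: ifP. Qed.

Lemma zone_reachable (R : realFieldType) (up : bool) (x y : R) :
  (if up then x < y else y < x) -> reachable up (zone x) (zone y).
Proof.
suff zone_lt (u v : R) : u < v ->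
    (zone u <= zone v)%N && ((zone u == zone v) ==> ~~ odd (zone u)).
  rewrite /reachable; case: up => /zone_lt // /andP[-> /=].
  by rewrite eq_sym; case: eqP => // ->.
move=> uv; rewrite /zone.
have [u1|u1] := ltrP u (-1); have [v1|v1] := ltrP v (-1);
have [eu1|eu1] := eqVneq u (-1); have [ev1|ev1] := eqVneq v (-1);
have [u2|u2] := ltrP u 1; have [v2|v2] := ltrP v 1;
have [eu2|eu2] := eqVneq u 1; have [ev2|ev2] := eqVneq v 1 => //; lra.
Qed.

Lemma special_zoneE (R : realFieldType) (a b : R) :
  special_zone (zone a) (zone b) =
  [|| a == 1, a == -1, b == 1 | b == -1] && (1 < a * b).
Proof.
rewrite /special_zone /zone.
have [a1|a1] := ltrP a (-1); have [b1|b1] := ltrP b (-1);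
have [ea1|ea1] := eqVneq a (-1); have [eb1|eb1] := eqVneq b (-1);
have [a2|a2] := ltrP a 1; have [b2|b2] := ltrP b 1;
have [ea2|ea2] := eqVneq a 1; have [eb2|eb2] := eqVneq b 1 => //=;
 try (exfalso; lra); try subst;
 rewrite ?mul1r ?mulr1 ?mulN1r ?mulrN1 ?andbF ?andbT ?orbT ?orbF ?eqxx //=;
 first [done | (apply/esym/idP; lra) | (apply/esym/negbTE; rewrite -leNgt; lra) | idtac].
Qed.

Lemma horner_monotone (R : rcfType) (p : {poly R}) (l r : R) :
  l < r -> {in `]l, r[, noroot p^`()} ->
  {in `[l, r] &, forall x y, x < y ->
    if p.[l] < p.[r] then p.[x] < p.[y] else p.[y] < p.[x]}.
Proof.
move=> lr p'_nr x y xlr ylr xy.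
have llr : l \in `[l, r] by rewrite in_itv /= lexx ltW.
have rlr : r \in `[l, r] by rewrite in_itv /= lexx ltW.
rewrite !(lgtr_horner lr p'_nr) //.
by case: (_ < 0); rewrite ?mul1r ?mulN1r ?ltrN2 ?lr ?(lt_gtF lr).
Qed.

Lemma horner_turn_root (R : rcfType) (p : {poly R}) (l c r : R) :
  l < c -> c < r -> {in `]l, c[, noroot p^`()} -> {in `]c, r[, noroot p^`()} ->
  (p.[l] < p.[c]) != (p.[c] < p.[r]) -> root p^`() c.
Proof.
move=> lc cr lc_nr cr_nr; apply: contraR => c_nr; have lr := lt_trans lc cr.
have lr_nr : {in `]l, r[, noroot p^`()}.
  move=> x; rewrite in_itv /= => /andP[lx xr].
  have [xc|cx|-> //] := ltrgtP x c.
    by apply: lc_nr; rewrite in_itv /= lx xc.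
  by apply: cr_nr; rewrite in_itv /= cx xr.
have in_lr x : l <= x <= r -> x \in `[l, r] by rewrite in_itv.
have [ll cc rr] : [/\ l \in `[l, r], c \in `[l, r] & r \in `[l, r]].
  by split; apply: in_lr; rewrite ?lexx ?(ltW lc) ?(ltW cr) ?(ltW lr).
have mono := horner_monotone lr lr_nr.
have := mono l c ll cc lc; have := mono c r cc rr cr.
by case: ifP => _ => [-> ->|/lt_gtF -> /lt_gtF ->].
Qed.

Definition count_in (R : realDomainType) (s : seq R) (p q : R) : nat :=
  count (fun x => p < x <= q) s.

Lemma count_in_split (R : realDomainType) (s : seq R) (p m q : R) :
  p <= m -> m <= q -> count_in s p q = (count_in s p m + count_in s m q)%N.
Proof.
move=> pm mq; rewrite /count_in -count_predUI.
rewrite (@eq_count _ (predI _ _) pred0) ?count_pred0 ?addn0 => [|x /=]; last first.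
  by apply/negP => /andP[/andP[_ xm] /andP[mx _]]; lra.
apply: eq_count => x /=.
have [px|xp] := ltrP p x; have [xq|qx] := lerP x q;
have [mx|xm] := ltrP m x; have [xm'|mx'] := lerP x m => //=; lra.
Qed.

Section Sweep.
Variables (R : rcfType) (g h : {poly R}).

Definition special_at (x : R) : bool := special_zone (zone g.[x]) (zone h.[x]).

Definition pot_on (l r x : R) : nat :=
  pot (g.[l] < g.[r]) (h.[l] < h.[r]) (zone g.[x]) (zone h.[x]).

Section Piece.
Variables (l r : R).
Hypotheses (lr : l < r) (g'_nr : {in `]l, r[, noroot g^`()})
  (h'_nr : {in `]l, r[, noroot h^`()}).
Local Notation pot_lr := (pot_on l r).

Lemma pot_on_step p q : l <= p -> p < q -> q <= r ->
  (pot_lr q + special_at q <= pot_lr p)%N.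
Proof.
move=> lp pq qr.
have pi : p \in `[l, r] by rewrite in_itv /= lp (ltW (lt_le_trans pq qr)).
have qi : q \in `[l, r] by rewrite in_itv /= qr (ltW (le_lt_trans lp pq)).
apply: pot_step; rewrite ?zone_in //; apply: zone_reachable; exact: horner_monotone.
Qed.

Lemma pot_on_path p xs : l <= p -> path <%R p xs -> all (<= r) xs ->
  all special_at xs -> (size xs + pot_lr (last p xs) <= pot_lr p)%N.
Proof.
elim: xs p => [|x xs IH] p lp //= /andP[px xs_path] /andP[xr xs_r] /andP[sx xs_sp].
have := pot_on_step lp px xr; have := IH x (ltW (le_lt_trans lp px)) xs_path xs_r xs_sp.
by rewrite sx addn1 addSn; apply: leq_ltn_trans.
Qed.

Lemma count_in_piece s p q : l <= p -> p <= q -> q <= r -> uniq s ->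
  all special_at s -> (count_in s p q + pot_lr q <= pot_lr p)%N.
Proof.
move=> lp pq qr s_uniq s_sp.
set xs := sort <=%R [seq x <- s | p < x <= q].
have xsP x : x \in xs -> [/\ p < x, x <= q & special_at x].
  by rewrite mem_sort mem_filter => /andP[/andP[px xq] /(allP s_sp)].
have xs_path : path <%R p xs.
  rewrite path_sortedE; last exact: lt_trans.
  by rewrite sort_lt_sorted filter_uniq // andbT; apply/allP => x /xsP[].
have xs_r : all (<= r) xs by apply/allP => x /xsP[_ xq _]; exact: le_trans qr.
have xs_sp : all special_at xs by apply/allP => x /xsP[].
have := pot_on_path lp xs_path xs_r xs_sp.
rewrite size_sort size_filter -/(count_in s p q).
have /andP[p_last last_q] : p <= last p xs <= q.
  by have := mem_last p xs; rewrite inE => /orP[/eqP->|/xsP[/ltW -> ->]]; rewrite ?lexx.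
move: last_q; rewrite le_eqVlt => /orP[/eqP->//|last_q].
by have := pot_on_step (le_trans lp p_last) last_q qr; lia.
Qed.

End Piece.

Local Notation crit := (g^`() * h^`()).

Lemma crit_noroot (i : interval R) : {in i, noroot crit} ->
  {in i, noroot g^`()} /\ {in i, noroot h^`()}.
Proof. by move=> nr; split=> x /nr; rewrite rootM negb_or => /andP[]. Qed.

Lemma first_gap_noroot p cs z : path <%R p (rcons cs z) ->
  {in `]p, z[, forall x, root crit x -> x \in cs} ->
  p < head z cs /\ {in `]p, head z cs[, noroot crit}.
Proof.
move=> cs_path cover.
have [p_head head_min] : p < head z cs /\ {in rcons cs z, forall y, head z cs <= y}.
  case: {cover}cs cs_path => [|c cs] /=.
    by rewrite andbT => pz; split=> // y /[!inE] /eqP->.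
  move=> /andP[pc c_path]; split=> // y /[!inE] /orP[/eqP-> //|ycs].
  exact/ltW/(allP (order_path_min lt_trans c_path)).
split=> // x; rewrite in_itv /= => /andP[px x_head]; apply/negP => rx.
have xz : x < z by apply: lt_le_trans x_head (head_min _ _); rewrite mem_rcons mem_head.
have := cover x; rewrite in_itv /= px xz => /(_ isT rx) xcs.
by have := head_min x; rewrite mem_rcons inE xcs orbT => /(_ isT); rewrite leNgt x_head.
Qed.

Lemma count_in_sweep s cs p z : uniq s -> all special_at s ->
  path <%R p (rcons cs z) -> {in `]p, z[, forall x, root crit x -> x \in cs} ->
  (count_in s p z <= pot_on p (head z cs) p
                     + count (root g^`()) cs + count (root h^`()) cs)%N.
Proof.
move=> s_uniq s_sp; elim: cs p => [|c cs IH] p cs_path cover.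
  have [pz /crit_noroot[g_nr h_nr]] := first_gap_noroot cs_path cover.
  have := count_in_piece pz g_nr h_nr (lexx p) (ltW pz) (lexx z) s_uniq s_sp.
  by rewrite /= !addn0; apply: leq_trans; rewrite leq_addr.
have [/= pc /crit_noroot[g_nr h_nr]] := first_gap_noroot cs_path cover.
move: cs_path => /= /andP[_ c_path].
have cz : c < z by apply: (allP (order_path_min lt_trans c_path)); rewrite mem_rcons mem_head.
have cover' : {in `]c, z[, forall x, root crit x -> x \in cs}.
  move=> x; rewrite in_itv /= => /andP[cx xz] rx.
  have : x \in `]p, z[ by rewrite in_itv /= xz (lt_trans pc cx).
  by move=> /cover/(_ rx); rewrite inE (gt_eqF cx).
have [c_head /crit_noroot[g_nr' h_nr']] := first_gap_noroot c_path cover'.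
have turn_g : leq ((g.[p] < g.[c]) != (g.[c] < g.[head z cs])) (root g^`() c).
  by move: (horner_turn_root pc c_head g_nr g_nr'); case: (_ != _) => // ->.
have turn_h : leq ((h.[p] < h.[c]) != (h.[c] < h.[head z cs])) (root h^`() c).
  by move: (horner_turn_root pc c_head h_nr h_nr'); case: (_ != _) => // ->.
have turn : leq (pot_on c (head z cs) c) (pot_on p c c + root g^`() c + root h^`() c).
  apply: leq_trans (pot_turn (g.[p] < g.[c]) (h.[p] < h.[c]) _ _ (zone_in _) (zone_in _)) _.
  exact: leq_add (leq_add (leqnn _) turn_g) turn_h.
have piece := count_in_piece pc g_nr h_nr (lexx p) (ltW pc) (lexx c) s_uniq s_sp.
move: (IH c c_path cover') piece turn; rewrite (count_in_split s (ltW pc) (ltW cz)) /=.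
move: (count_in s p c) (count_in s c z) (pot_on p c p) (pot_on p c c) => a b P0 P0c.
move: (pot_on c _ c) (nat_of_bool (root g^`() c)) (nat_of_bool (root h^`() c)) => P1c rg rh.
move: (count (root g^`()) cs) (count (root h^`()) cs) => cg ch; lia.
Qed.

End Sweep.

Lemma count_root_le (R : idomainType) (p : {poly R}) (cs : seq R) :
  p != 0 -> uniq cs -> (count (root p) cs <= (size p).-1)%N.
Proof.
move=> p0 cs_uniq; rewrite -size_filter -ltnS prednK ?size_poly_gt0 //.
by apply: max_poly_roots p0 (filter_all _ _) (filter_uniq _ cs_uniq).
Qed.

Lemma seq_bounded (R : realDomainType) (l : seq R) :
  exists2 M, 0 < M & {in l, forall x, - M < x < M}.
Proof.
exists (\big[Order.max/0]_(x <- l) `|x| + 1) => [|x xl].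
  by rewrite ltr_wpDl // bigmax_ge_id.
by rewrite -ltr_norml ltr_pwDr //; apply: (le_bigmax_seq _ _ _ _ xl).
Qed.

Lemma special_count_le (R : rcfType) (g h : {poly R}) (s : seq R) :
  (1 < size g)%N -> (1 < size h)%N -> uniq s -> all (special_at g h) s ->
  (size s <= (size g + size h).-2)%N.
Proof.
move=> gs hs s_uniq s_sp.
have g'0 : g^`() != 0 by rewrite -size_poly_gt0 size_deriv -subn1 subn_gt0.
have h'0 : h^`() != 0 by rewrite -size_poly_gt0 size_deriv -subn1 subn_gt0.
set cs := rootsR (g^`() * h^`()).
have cs_root x : (x \in cs) = root (g^`() * h^`()) x.
  by rewrite -(roots_on_rootsR (mulf_neq0 g'0 h'0) x).
have [M M0 M_bound] := seq_bounded (s ++ cs).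
have cs_bound x : x \in cs -> - M < x < M.
  by move=> xcs; apply: M_bound; rewrite mem_cat xcs orbT.
have cs_path : path <%R (- M) (rcons cs M).
  rewrite rcons_path path_sortedE; last exact: lt_trans.
  rewrite sorted_roots andbT; apply/andP; split.
    by apply/allP => x /cs_bound /andP[].
  have := mem_last (- M) cs; rewrite inE => /orP[/eqP-> |xcs]; first lra.
  by have /andP[] := cs_bound _ xcs.
have := count_in_sweep s_uniq s_sp cs_path (fun x _ rx => etrans (cs_root x) rx).
have -> : count_in s (- M) M = size s.
  rewrite -(count_predT s); apply: eq_in_count => x xs.
  by have /andP[/= -> /ltW ->] := M_bound x ltac:(by rewrite mem_cat xs).
have pot2 : leq (pot_on g h (- M) (head M cs) (- M)) 2.
  exact: pot_le2 (zone_in _) (zone_in _).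
have cs_uniq : uniq cs := uniq_roots _ _ _.
have := count_root_le g'0 cs_uniq; have := count_root_le h'0 cs_uniq.
rewrite !size_deriv; move: pot2.
move: (pot_on _ _ _ _ _) (count (root g^`()) cs) (count (root h^`()) cs) => P cg ch.
move: gs hs; move: (size g) (size h) => m n; lia.
Qed.

Theorem mainTheorem7 (R : realType) (g h : {poly R}) :
  (1 < size g)%N -> (1 < size h)%N ->
  forall s : seq R, uniq s -> all (special_point g h) s ->
  (size s <= (size (g * h)%R).-1)%N.
Proof.
move=> gs hs s s_uniq s_sp.
rewrite size_mul -?size_poly_gt0 ?(ltnW gs) ?(ltnW hs) //.
apply: special_count_le gs hs s_uniq _; apply/sub_all: s_sp => x.
by rewrite /special_point /special_at special_zoneE hornerM.
Qed.
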